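(* Let $\mathcal K$ be any simplicial complex on $[m]$ and $\mathbf k$ a commutative ring. In the homology algebra $H(\Omega_*\mathbf k\langle\mathcal K\rangle)$ of the dg-algebra below, the classes $u_i=[\chi_{e_i}]$ and $w_I=[\psi_I]$ (for $I\in\mathrm{MF}(\mathcal K)$) satisfy: (1) $u_i^2=0$ for all $i$, and $[u_i,u_j]=0$ for all $\{i,j\}\in\mathcal K$; (2) $[u_i,w_I]=0$ if $i\in I\in\mathrm{MF}(\mathcal K)$; (3) $\sum_{i\in L,\ L\setminus\{i\}\notin\mathcal K}[u_i,w_{L\setminus\{i\}}]=0$ for every $L\in\mathrm{AMF}(\mathcal K)$.
   Context: $\Omega_*\mathbf k\langle\mathcal K\rangle$ is the dg-algebra $T(\chi_\alpha:\alpha\in\mathbb Z_{\ge0}^m\setminus\{0\},\ \operatorname{supp}\alpha\in\mathcal K)$ (free graded associative algebra), $\deg\chi_\alpha=2|\alpha|-1$ where $|\alpha|=\sum\alpha_i$ and $\operatorname{supp}\alpha=\{i:\alpha_i\ne0\}$, with differential $d(\chi_\alpha)=\sum_{\alpha=\beta+\gamma,\ \beta,\gamma\ne0}\chi_\beta\chi_\gamma$ extended as a derivation with Koszul signs. For $A\subseteq[m]$ write $\chi_A=\chi_{\sum_{i\in A}e_i}$, and for $I$ with all proper subsets in $\mathcal K$ set $\psi_I=\sum_{I=A\sqcup B,\ A,B\ne\varnothing}\chi_A\chi_B$ (a cycle). (This homology algebra is isomorphic to $H_*(\Omega DJ_{\mathcal K};\mathbf k)\cong\operatorname{Ext}_{\mathbf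 k[\mathcal K]}(\mathbf k,\mathbf k)$.) $[x,y]=xy-(-1)^{|x||y|}yx$. $\mathrm{MF}(\mathcal K)$: subsets $I\notin\mathcal K$ with all proper subsets in $\mathcal K$. $\mathrm{AMF}(\mathcal K)$: subsets $L$ with all subsets of size $\le|L|-2$ in $\mathcal K$ but not all subsets of size $|L|-1$ in $\mathcal K$ (i.e. $\partial^2\Delta_L\subseteq\mathcal K_L\subsetneq\partial\Delta_L$). *)

From HB Require Import structures.
From mathcomp Require Import all_boot all_order all_algebra.
Set Implicit Arguments. Unset Strict Implicit. Unset Printing Implicit Defensive.
Import GRing.Theory.
Local Open Scope ring_scope.

(* The dg-algebra Omega_* k<K> is the free graded associative
   k-algebra on letters chi_alpha; we represent its elements as finite formal
   k-linear combinations of words (lists of letters). *)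

Section Omega.
Variable m : nat.

Definition letter := {ffun 'I_m -> nat}.
Definition word := seq letter.
Definition l0 : letter := [ffun => 0%N].

Definition lnz (a : letter) : bool := [exists i, a i != 0%N].
Definition supp (a : letter) : {set 'I_m} := [set i | a i != 0%N].

Definition simplicial_complex (K : {set {set 'I_m}}) : Prop :=
  (forall A B : {set 'I_m}, B \subset A -> A \in K -> B \in K) /\
  (forall i : 'I_m, [set i] \in K).

Variable K : {set {set 'I_m}}.

Definition valid_letter (a : letter) : bool := lnz a && (supp a \in K).

Definition chiA (A : {set 'I_m}) : letter := [ffun i => nat_of_bool (i \in A)].

(* Coefficient of the word w in d(v), for v a word of generators.  Each letter has
   odd degree 2|alpha|-1, so the Koszul sign for differentiating the j-th letter
   (0-indexed) is (-1)^j; d(chi_a) = sum_{a = b + c, b,c <> 0} chi_b chi_c. *)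
Definition dcoef (v w : word) : int :=
  if size w == (size v).+1 then
    \sum_(j < size v)
      (if [&& take j w == take j v, drop j.+2 w == drop j.+1 v,
              lnz (nth l0 w j), lnz (nth l0 w j.+1) &
              [ffun i => (nth l0 w j i + nth l0 w j.+1 i)%N] == nth l0 v j]
       then (-1) ^+ j else 0)
  else 0.

Variable k : comPzRingType.

Definition chain := seq (k * word).

Definition coeff (x : chain) (w : word) : k := \sum_(p <- x | p.2 == w) p.1.

Definition chain_add (x y : chain) : chain := x ++ y.
Definition chain_scale (c : k) (x : chain) : chain := [seq (c * p.1, p.2) | p <- x].
Definition chain_mul (x y : chain) : chain :=
  [seq (p.1 * q.1, p.2 ++ q.2) | p <- x, q <- y].

Definition gcomm (dx dy : nat) (x y : chain) : chain :=
  chain_add (chain_mul x y) (chain_scale (- (-1) ^+ (dx * dy)) (chain_mul y x)).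

Definition in_Omega (z : chain) : bool := all (fun p => all valid_letter p.2) z.

(* x represents the zero class in homology: x = d z for some z in Omega_* k<K> *)
Definition is_boundary (x : chain) : Prop :=
  exists z : chain, in_Omega z /\
    forall w : word, coeff x w = \sum_(p <- z) p.1 * (dcoef p.2 w)%:~R.

Definition u_chain (i : 'I_m) : chain := [:: (1, [:: chiA [set i]])].

Definition psi (I : {set 'I_m}) : chain :=
  [seq (1, [:: chiA A; chiA (I :\: A)])
  | A <- enum [set A : {set 'I_m} | [&& A \subset I, A != set0 & A != I]]].

Definition MF (I : {set 'I_m}) : bool :=
  (I \notin K) && [forall J : {set 'I_m}, (J \proper I) ==> (J \in K)].

Definition AMF (L : {set 'I_m}) : bool :=
  [forall J : {set 'I_m}, ((J \subset L) && (#|J|.+2 <= #|L|)%N) ==> (J \in K)] &&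
  ~~ [forall J : {set 'I_m}, ((J \subset L) && (#|J|.+1 == #|L|)%N) ==> (J \in K)].

(* sum_{i in L, L \ {i} notin K} [u_i, w_{L\{i}}], with deg u_i = 1 and
   deg w_I = 2|I| - 2 *)
Definition amf_sum (L : {set 'I_m}) : chain :=
  flatten [seq gcomm 1 (2 * #|L :\ i| - 2) (u_chain i) (psi (L :\ i))
          | i <- enum L & (L :\ i) \notin K].

End Omega.

From mathcomp Require Import all_boot all_algebra ring zify.
Set Implicit Arguments. Unset Strict Implicit. Unset Printing Implicit Defensive.
Import GRing.Theory.

(* Every relation already holds at chain level: its left-hand side is d z for an
   explicit z in Omega.  For u_i^2, and for [u_i, u_j] with i <> j, take
   z = chi_{e_i + e_j} (and [u_i, u_i] = 2 u_i^2).  For (2) and (3) put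
   alpha = e_I + e_i, resp. alpha = e_L, where e_A = sum_{i in A} e_i, and let z be
   the sum of chi_b chi_c over all decompositions alpha = b + c into generators.
   In d z every decomposition alpha = a + b + c into nonzero multi-indices contributes
   chi_a chi_b chi_c with sign + if a + b is a generator and with sign - if b + c is
   one (c, resp. a, always is).  The (almost) minimal non-face conditions say that
   a + b fails to be a generator exactly when c = e_i for one of the indices i of the
   sum, so what survives is sum_i (chi_{e_i} psi_{alpha - e_i} - psi_{alpha - e_i} chi_{e_i}),
   the sum of the commutators in (2), resp. (3). *)

Section Letters.
Variable m : nat.
Implicit Types (a b c d : letter m) (A I L : {set 'I_m}) (i j : 'I_m).

Definition ladd a b : letter m := [ffun j => (a j + b j)%N].
Definition lsub a b : letter m := [ffun j => (a j - b j)%N].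
Definition lweight a : nat := \sum_j a j.
Definition lunit i : letter m := chiA [set i].

Lemma letterP a b : (forall j, a j = b j) -> a = b.
Proof. by move=> E; apply/ffunP. Qed.

Lemma laddE a b j : ladd a b j = (a j + b j)%N. Proof. by rewrite ffunE. Qed.
Lemma chiAE A j : chiA A j = (j \in A) :> nat. Proof. by rewrite ffunE. Qed.

Lemma laddC a b : ladd a b = ladd b a.
Proof. by apply/letterP=> j; rewrite !laddE addnC. Qed.

Lemma laddA a b c : ladd a (ladd b c) = ladd (ladd a b) c.
Proof. by apply/letterP=> j; rewrite !laddE addnA. Qed.

Lemma laddI a b c : ladd a b = ladd a c -> b = c.
Proof. by move=> E; apply/letterP=> j; apply/(@addnI (a j)); rewrite -!laddE E. Qed.

Lemma laddIr a b c : ladd b a = ladd c a -> b = c.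
Proof. by rewrite !(laddC _ a); apply: laddI. Qed.

Lemma chiA_inj : injective (@chiA m).
Proof.
move=> A B E; apply/setP=> j.
by have := congr1 (fun x : letter m => x j) E; rewrite !chiAE; do 2 case: (_ \in _).
Qed.

Lemma lunit_inj : injective lunit.
Proof. by move=> i j /chiA_inj/setP/(_ i); rewrite !inE eqxx => /esym/eqP. Qed.

Lemma supp_chiA A : supp (chiA A) = A.
Proof. by apply/setP=> j; rewrite inE chiAE; case: (j \in A). Qed.

Lemma supp_ladd a b : supp (ladd a b) = supp a :|: supp b.
Proof. by apply/setP=> j; rewrite !inE laddE addn_eq0 negb_and. Qed.

Lemma chiA_setD1 L i : i \in L -> ladd (chiA (L :\ i)) (lunit i) = chiA L.
Proof.
move=> iL; apply/letterP=> j; rewrite laddE !chiAE !inE.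
by case: (eqVneq j i) => [->|_] /=; rewrite ?iL ?addn0.
Qed.

Lemma chiA_setD A I : A \subset I -> ladd (chiA A) (chiA (I :\: A)) = chiA I.
Proof.
move=> AI; apply/letterP=> j; rewrite laddE !chiAE inE.
by case: (boolP (j \in A)) => [/(subsetP AI) ->|] /=.
Qed.

Lemma ladd_eq_chiA a b I : ladd a b = chiA I ->
  a = chiA (supp a) /\ b = chiA (I :\: supp a).
Proof.
move=> E; have Ej j : (a j + b j = (j \in I))%N by rewrite -laddE E chiAE.
split; apply/letterP=> j; rewrite chiAE !inE; have := Ej j;
  by case: (j \in I); case: (a j) => [|[|?]] /=; lia.
Qed.

Lemma lweightD a b : lweight (ladd a b) = (lweight a + lweight b)%N.
Proof. by rewrite /lweight -big_split; apply: eq_bigr => j _; rewrite laddE. Qed.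

Lemma lweight_chiA A : lweight (chiA A) = #|A|.
Proof.
by rewrite /lweight -sum1_card [RHS]big_mkcond; apply: eq_bigr => j _; rewrite chiAE.
Qed.

Lemma lnz_lweight a : lnz a = (0 < lweight a)%N.
Proof. by rewrite lt0n sum_nat_eq0 negb_forall. Qed.

Lemma lnz_supp a : lnz a = (supp a != set0).
Proof. by apply/existsP/set0Pn=> -[j aj]; exists j; rewrite inE in aj *. Qed.

Lemma card_supp_le a : (#|supp a| <= lweight a)%N.
Proof.
rewrite -lweight_chiA; apply: leq_sum => j _.
by rewrite chiAE inE; case: (a j).
Qed.

Lemma lweight_unit i : lweight (lunit i) = 1%N.
Proof. by rewrite lweight_chiA cards1. Qed.

Lemma lnz_unit i : lnz (lunit i).
Proof. by rewrite lnz_lweight lweight_unit. Qed.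

Lemma lweight1_unit a : lweight a = 1%N -> exists i, a = lunit i.
Proof.
move=> wa; have /existsP [i ai] : lnz a by rewrite lnz_lweight wa.
move: wa; rewrite /lweight (bigD1 i) //=.
case ai1: (a i) ai => [|[|n]] // _ /eqP; rewrite ?addnS // add1n eqSS sum_nat_eq0.
move=> /forall_inP rest0; exists i; apply/letterP=> j; rewrite chiAE inE.
by case: (eqVneq j i) => [->|/rest0/eqP //]; rewrite ai1.
Qed.

Lemma ladd_eq_units a b i j : lnz a -> lnz b -> ladd a b = ladd (lunit i) (lunit j) ->
  (a = lunit i /\ b = lunit j) \/ (a = lunit j /\ b = lunit i).
Proof.
rewrite !lnz_lweight => a0 b0 E.
have := congr1 lweight E; rewrite !lweightD !lweight_unit => w2.
have [[x Ea] [y Eb]] : (exists x, a = lunit x) /\ (exists y, b = lunit y).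
  by split; apply: lweight1_unit; lia.
subst a b.
have : x \in supp (ladd (lunit x) (lunit y)) by rewrite supp_ladd supp_chiA !inE eqxx.
rewrite E supp_ladd !supp_chiA !inE => /orP [] /eqP Ex; subst x; [left | right].
  by split=> //; apply: laddI E.
by split=> //; rewrite (laddC (lunit i)) in E; apply: laddI E.
Qed.

Lemma unit_of_cover x y I i : I \subset supp x -> lnz y ->
  ladd x y = ladd (chiA I) (lunit i) -> y = lunit i.
Proof.
move=> Ix y0 E.
have Ex : x = ladd (chiA I) (lsub x (chiA I)).
  apply/letterP=> j; rewrite laddE !ffunE.
  case: (boolP (j \in I)) => [/(subsetP Ix)|_]; last by rewrite subn0.
  by rewrite inE /=; lia.
rewrite Ex -laddA in E; move/laddI: E => E.
have := congr1 lweight E; rewrite lweightD lweight_unit lnz_lweight in y0 *.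
move=> w; have [z Ey] : exists z, y = lunit z by apply: lweight1_unit; lia.
have : z \in supp (ladd (lsub x (chiA I)) y) by rewrite supp_ladd Ey supp_chiA !inE eqxx orbT.
by rewrite E supp_chiA inE Ey => /eqP ->.
Qed.

End Letters.

Section MissingFaces.
Variables (m : nat) (K : {set {set 'I_m}}).
Implicit Types (c d : letter m) (I J L : {set 'I_m}) (i : 'I_m).

Lemma mf_mem I J : MF K I -> J \subset I -> (J \in K) = (J != I).
Proof.
case/andP=> IK /forallP properK JI; case: (eqVneq J I) => [->|JnI]; first exact/negbTE.
by apply: (implyP (properK J)); rewrite properEneq JnI.
Qed.

Lemma mf_pair I i c d : MF K I -> i \in I -> lnz c -> (1 < lweight d)%N ->
  ladd d c = ladd (chiA I) (lunit i) ->
  valid_letter K c && (valid_letter K d == (c != lunit i)).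
Proof.
move=> mfI iI c0 d1 E.
have suppE : supp (ladd d c) = I by rewrite E supp_ladd !supp_chiA; apply/setUidPl; rewrite sub1set.
have d0 : lnz d by rewrite lnz_lweight ltnW.
have dI : supp d \subset I by rewrite -suppE supp_ladd subsetUl.
have cI : supp c \subset I by rewrite -suppE supp_ladd subsetUr.
rewrite /valid_letter c0 d0 !(mf_mem mfI) //=; apply/andP; split.
  apply/eqP=> cE; have dE : d = lunit i.
    by apply: (unit_of_cover (x := c)) => //; rewrite ?cE // laddC.
  by move: d1; rewrite dE lweight_unit.
apply/eqP; congr negb; apply/eqP/eqP=> [dE|cE].
  by apply: (unit_of_cover (x := d)); rewrite ?dE.
by move: E; rewrite cE => /laddIr ->; rewrite supp_chiA.
Qed.

Lemma amf_small L J : AMF K L -> J \subset L -> (#|J|.+2 <= #|L|)%N -> J \in K.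
Proof. by case/andP=> /forallP smallK _ JL JLc; apply: (implyP (smallK J)); rewrite JL. Qed.

Lemma amf_pair L c d : AMF K L -> lnz c -> (1 < lweight d)%N -> ladd d c = chiA L ->
  valid_letter K c &&
  (valid_letter K d == (c \notin [seq lunit i | i <- enum L & L :\ i \notin K])).
Proof.
move=> amfL c0 d1 E.
have wL : (lweight d + lweight c)%N = #|L| by rewrite -lweightD E lweight_chiA.
have dL : supp d \subset L by rewrite -(supp_chiA L) -E supp_ladd subsetUl.
have cL : supp c \subset L by rewrite -(supp_chiA L) -E supp_ladd subsetUr.
have d0 : lnz d by rewrite lnz_lweight ltnW.
have small (x : letter m) : supp x \subset L -> (lweight x + 2 <= #|L|)%N -> supp x \in K.
  by move=> xL xw; apply: (amf_small amfL xL); have := card_supp_le x; lia.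
rewrite /valid_letter c0 d0 small //=; last by rewrite -wL addnC leq_add2r.
have [c1|c2] : lweight c = 1%N \/ (1 < lweight c)%N by move: c0; rewrite lnz_lweight; lia.
  have [i cE] := lweight1_unit c1; subst c.
  have iL : i \in L by move/subsetP: cL; apply; rewrite supp_chiA inE.
  move: E; rewrite -(chiA_setD1 iL) => /laddIr ->.
  by rewrite supp_chiA (mem_map (@lunit_inj m)) mem_filter mem_enum iL; case: (_ \in K).
rewrite small //; last by rewrite -wL leq_add2l.
by apply/negP=> /mapP [i _ cE]; move: c2; rewrite cE lweight_unit.
Qed.

End MissingFaces.

Section Chains.
Variables (m : nat) (k : comPzRingType).
Local Open Scope ring_scope.
Implicit Types (x y z : chain m k) (a b : letter m) (i j : 'I_m) (I : {set 'I_m}).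

Definition dcoeff z w : k := \sum_(p <- z) p.1 * (dcoef p.2 w)%:~R.

Definition homog (n : nat) x : bool := all (fun p => size p.2 == n) x.

Definition set_split I a b : bool := [&& lnz a, lnz b & ladd a b == chiA I].

Lemma coeff_cat x y (w : word m) : coeff (x ++ y) w = coeff x w + coeff y w.
Proof. by rewrite /coeff big_cat. Qed.

Lemma coeff_scale (c : k) x (w : word m) : coeff (chain_scale c x) w = c * coeff x w.
Proof. by rewrite /coeff big_map mulr_sumr. Qed.

Lemma coeff_flatten (s : seq (chain m k)) (w : word m) :
  coeff (flatten s) w = \sum_(x <- s) coeff x w.
Proof. by rewrite /coeff big_flatten. Qed.

Lemma coeff_word (c : k) (v w : word m) : coeff [:: (c, v)] w = if v == w then c else 0.
Proof. by rewrite /coeff big_cons big_nil /=; case: (v == w); rewrite ?addr0. Qed.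

Lemma coeff_homog_eq0 n x (w : word m) : homog n x -> size w != n -> coeff x w = 0.
Proof.
move=> /allP hx wn; rewrite /coeff big_seq_cond big1 // => p /andP [px /eqP pw].
by move: wn; rewrite -pw (eqP (hx p px)) eqxx.
Qed.

Lemma dcoeff_homog_eq0 n z (w : word m) : homog n z -> size w != n.+1 -> dcoeff z w = 0.
Proof.
move=> /allP hz wn; rewrite /dcoeff big_seq big1 // => p pz.
by rewrite /dcoef (eqP (hz p pz)) (negPf wn) mulr0.
Qed.

Lemma homog_cat n x y : homog n x -> homog n y -> homog n (x ++ y).
Proof. by rewrite /homog all_cat => -> ->. Qed.

Lemma homog_scale n (c : k) x : homog n x -> homog n (chain_scale c x).
Proof. by rewrite /homog all_map. Qed.

Lemma homog_mul n1 n2 x y : homog n1 x -> homog n2 y -> homog (n1 + n2) (chain_mul x y).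
Proof.
move=> /allP hx /allP hy; apply/all_allpairsP=> p q px qy /=.
by rewrite size_cat (eqP (hx p px)) (eqP (hy q qy)).
Qed.

Lemma homog_flatten n (s : seq (chain m k)) : all (homog n) s -> homog n (flatten s).
Proof. by elim: s => //= x s IH /andP [hx /IH]; apply: homog_cat. Qed.

Lemma homog_unit i : homog 1 (u_chain k i).
Proof. by []. Qed.

Lemma homog_psi I : homog 2 (psi k I).
Proof. by rewrite /homog all_map; apply/allP. Qed.

Lemma homog_comm_unit_psi dx dy i I : homog 3 (gcomm dx dy (u_chain k i) (psi k I)).
Proof.
have uP := homog_mul (homog_unit i) (homog_psi I).
have Pu := homog_mul (homog_psi I) (homog_unit i).
by rewrite /gcomm /chain_add homog_cat ?homog_scale.
Qed.

Lemma coeff_mul_unit_l i x a (w : word m) :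
  coeff (chain_mul (u_chain k i) x) (a :: w) = if a == lunit i then coeff x w else 0.
Proof.
rewrite /chain_mul allpairs1l /coeff big_map /=.
under eq_bigl do rewrite eqseq_cons eq_sym.
by case: (a == lunit i); [apply: eq_bigr => p _; rewrite mul1r | rewrite big_pred0].
Qed.

Lemma coeff_mul_unit_r i x a (w : word m) :
  coeff (chain_mul x (u_chain k i)) (rcons w a) = if a == lunit i then coeff x w else 0.
Proof.
rewrite /chain_mul allpairs1r /coeff big_map /=.
under eq_bigl do rewrite cats1 eqseq_rcons andbC eq_sym.
by case: (a == lunit i); [apply: eq_bigr => p _; rewrite mulr1 | rewrite big_pred0].
Qed.

Lemma coeff_psi I a b : coeff (psi k I) [:: a; b] = if set_split I a b then 1 else 0.
Proof.
rewrite /psi /coeff big_map big_enum_cond /=.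
case: ifP => [/and3P [a0 b0 /eqP E] | nsplit].
  have [Ea Eb] := ladd_eq_chiA E.
  have aI : supp a \subset I by rewrite -(supp_chiA I) -E supp_ladd subsetUl.
  rewrite (bigD1 (supp a)) /=; last first.
    rewrite inE aI -Ea -Eb eqxx andbT -lnz_supp a0 /=.
    by apply: contraTneq b0 => aE; rewrite Eb aE setDv lnz_supp supp_chiA eqxx.
  rewrite big1 ?addr0 // => A /andP [/andP [_]]; rewrite !eqseq_cons andbT.
  by case/andP=> /eqP AE _; rewrite -AE supp_chiA eqxx.
rewrite big1 // => A /andP []; rewrite inE !eqseq_cons andbT => /and3P [AI A0 AnI].
case/andP=> /eqP Ea /eqP Eb; move: nsplit; rewrite /set_split -Ea -Eb.
rewrite chiA_setD // eqxx andbT !lnz_supp !supp_chiA A0 /=.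
by move/negbFE; rewrite setD_eq0 => IA; rewrite eqEsubset AI IA in AnI.
Qed.

Lemma sign_even n : (-1) ^+ (1 * (2 * n - 2)) = 1 :> k.
Proof. by rewrite mul1n -signr_odd; case: n => [|n] //; rewrite mulnS addKn oddM. Qed.

Lemma coeff_comm_unit_psi i I n (w0 w1 w2 : letter m) :
  coeff (gcomm 1 (2 * n - 2) (u_chain k i) (psi k I)) [:: w0; w1; w2] =
  (if (w0 == lunit i) && set_split I w1 w2 then 1 else 0)
  - (if (w2 == lunit i) && set_split I w0 w1 then 1 else 0).
Proof.
rewrite /gcomm /chain_add coeff_cat coeff_scale sign_even coeff_mul_unit_l.
rewrite (coeff_mul_unit_r i _ w2 [:: w0; w1]) !coeff_psi mulN1r.
by case: (w0 == _); case: (w2 == _).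
Qed.

Lemma sum_unit_mem (s : seq 'I_m) (c : letter m) : uniq s ->
  \sum_(i <- s) (if c == lunit i then 1 else 0 : k) = if c \in [seq lunit i | i <- s] then 1 else 0.
Proof.
elim: s => [|i s IH] /=; first by rewrite big_nil.
case/andP=> i_notin_s us; rewrite big_cons IH // in_cons.
case: (eqVneq c (lunit i)) => [->|_] /=; last by rewrite add0r.
by rewrite (mem_map (@lunit_inj m)) (negPf i_notin_s) addr0.
Qed.

Lemma coeff_eq_dcoeff_homog x z : homog 3 x -> homog 2 z ->
  (forall w0 w1 w2 : letter m, coeff x [:: w0; w1; w2] = dcoeff z [:: w0; w1; w2]) ->
  coeff x =1 dcoeff z.
Proof.
move=> hx hz E3 w; have [w3|wn3] := eqVneq (size w) 3.
  by case: w w3 => [|w0 [|w1 [|w2 []]]].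
by rewrite (coeff_homog_eq0 hx) ?(dcoeff_homog_eq0 hz).
Qed.

Lemma dcoef2 a b (w0 w1 w2 : letter m) : dcoef [:: a; b] [:: w0; w1; w2] =
  (if [&& lnz w0, lnz w1, ladd w0 w1 == a & w2 == b] then 1 else 0)
  - (if [&& lnz w1, lnz w2, w0 == a & ladd w1 w2 == b] then 1 else 0).
Proof.
rewrite /dcoef /= !big_ord_recr big_ord0 /= add0r expr1 expr0 !eqseq_cons !andbT.
by case: (w0 == a); case: (w2 == b); case: (lnz w0); case: (lnz w1); case: (lnz w2);
  case: (ladd w0 w1 == a); case: (ladd w1 w2 == b).
Qed.

Lemma dcoeff_homog2 z (w0 w1 w2 : letter m) : homog 2 z ->
  dcoeff z [:: w0; w1; w2] =
  (if lnz w0 && lnz w1 then coeff z [:: ladd w0 w1; w2] else 0)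
  - (if lnz w1 && lnz w2 then coeff z [:: w0; ladd w1 w2] else 0).
Proof.
elim: z => [|[c v] z IH] /=.
  by rewrite /dcoeff /coeff !big_nil; do 2 case: ifP; rewrite subr0.
case/andP=> /eqP v2 hz; rewrite /dcoeff /coeff !big_cons -/(dcoeff z _) -!/(coeff z _) IH //=.
case: v v2 => [|a [|b []]] // _; rewrite dcoef2 !eqseq_cons !andbT ![_ == a]eq_sym ![_ == b]eq_sym.
case: (a == ladd w0 w1); case: (b == w2); case: (lnz w0); case: (lnz w1); case: (lnz w2);
  case: (a == w0); case: (b == ladd w1 w2) => /=; rewrite ?mulr1 ?mulr0; ring.
Qed.

Lemma dcoef_unit_sum i j (w : word m) : dcoef [:: ladd (lunit i) (lunit j)] w =
  if (w == [:: lunit i; lunit j]) || (w == [:: lunit j; lunit i]) then 1 else 0.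
Proof.
case: w => [|a [|b [|c w]]]; rewrite /dcoef //= ?eqseq_cons ?andbF //.
rewrite big_ord_recr big_ord0 /= add0r !andbT expr0 -/(ladd a b).
congr (if _ then _ else _); apply/idP/idP.
  by case/and3P=> a0 b0 /eqP E; case: (ladd_eq_units a0 b0 E) => -[-> ->]; rewrite !eqxx ?orbT.
by case/orP=> /andP [/eqP -> /eqP ->]; rewrite !lnz_unit ?(laddC (lunit j)) eqxx.
Qed.
End Chains.

Section Boundaries.
Variables (m : nat) (K : {set {set 'I_m}}) (k : comPzRingType).
Local Open Scope ring_scope.
Implicit Types (x z : chain m k) (a b : letter m) (i j : 'I_m).

Lemma boundary_of z x : in_Omega K z -> coeff x =1 dcoeff z -> is_boundary K x.
Proof. by move=> Oz xz; exists z. Qed.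

Lemma is_boundary_cat x1 x2 : is_boundary K x1 -> is_boundary K x2 -> is_boundary K (x1 ++ x2).
Proof.
move=> [z1 [O1 E1]] [z2 [O2 E2]]; exists (z1 ++ z2); split.
  by rewrite /in_Omega all_cat; apply/andP.
by move=> w; rewrite coeff_cat E1 E2 big_cat.
Qed.

Lemma is_boundary_scale (c : k) x : is_boundary K x -> is_boundary K (chain_scale c x).
Proof.
move=> [z [Oz E]]; exists (chain_scale c z); split; first by rewrite /in_Omega all_map.
by move=> w; rewrite coeff_scale E big_map mulr_sumr; apply: eq_bigr => p _; rewrite mulrA.
Qed.

Lemma valid_unit_sum i j : [set i; j] \in K -> valid_letter K (ladd (lunit i) (lunit j)).
Proof.
by rewrite /valid_letter lnz_lweight lweightD !lweight_unit supp_ladd !supp_chiA => ->.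
Qed.

Lemma is_boundary_unit_pairs i j x : [set i; j] \in K ->
  (forall w, coeff x w =
     if (w == [:: lunit i; lunit j]) || (w == [:: lunit j; lunit i]) then 1 else 0) ->
  is_boundary K x.
Proof.
move=> ijK E; apply: (boundary_of (z := [:: (1, [:: ladd (lunit i) (lunit j)])])).
  by rewrite /in_Omega /= valid_unit_sum.
by move=> w; rewrite E /dcoeff big_seq1 mul1r dcoef_unit_sum; case: ifP.
Qed.

Lemma unit_sq_boundary i : [set i] \in K ->
  is_boundary K (chain_mul (u_chain k i) (u_chain k i)).
Proof.
move=> iK; apply: (is_boundary_unit_pairs (i := i) (j := i)) => [|w]; first by rewrite setUid.
by rewrite coeff_word mul1r orbb eq_sym.
Qed.

Lemma unit_comm_boundary i j : [set i; j] \in K ->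
  is_boundary K (gcomm 1 1 (u_chain k i) (u_chain k j)).
Proof.
have [<- iK|ij ijK] := eqVneq i j.
  rewrite setUid in iK.
  by apply: is_boundary_cat; [|apply: is_boundary_scale]; apply: unit_sq_boundary.
apply: (is_boundary_unit_pairs ijK) => w.
rewrite /gcomm /chain_add coeff_cat coeff_scale !coeff_word !mul1r expr1 opprK mul1r.
rewrite ![_ == w]eq_sym; case: (eqVneq w [:: lunit i; lunit j]) => [->|] /=.
  by rewrite eqseq_cons (inj_eq (@lunit_inj m)) (negPf ij) addr0.
by rewrite add0r.
Qed.

End Boundaries.

Section Splits.
Variables (m : nat) (K : {set {set 'I_m}}) (k : comPzRingType).
Local Open Scope ring_scope.
Implicit Types (a b al : letter m).

Definition bounded_letter n (f : {ffun 'I_m -> 'I_n}) : letter m := [ffun j => f j : nat].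

(* The coordinates range over 'I_(|al|+1) only to make the enumeration finite. *)
Definition splits al : chain m k :=
  [seq (1, [:: bounded_letter f; lsub al (bounded_letter f)])
  | f <- enum [pred f : {ffun 'I_m -> 'I_(lweight al).+1} |
      [&& [forall j, bounded_letter f j <= al j]%N, valid_letter K (bounded_letter f)
        & valid_letter K (lsub al (bounded_letter f))]]].

Lemma homog_splits al : homog 2 (splits al).
Proof. by apply/allP=> p /mapP [f _ ->]. Qed.

Lemma in_Omega_splits al : in_Omega K (splits al).
Proof.
by apply/allP=> p /mapP [f]; rewrite mem_enum inE => /and3P [_ v1 v2] -> /=; rewrite v1 v2.
Qed.

Lemma letter_le_lweight a j : (a j <= lweight a)%N.
Proof. by rewrite /lweight (bigD1 j) //= leq_addr. Qed.

Lemma coeff_splits al a b : coeff (splits al) [:: a; b] =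
  if [&& ladd a b == al, valid_letter K a & valid_letter K b] then 1 else 0.
Proof.
rewrite /coeff big_map big_enum_cond /= big_mkcondr /=.
case: ifP => [/and3P [/eqP E va vb] | nsplit].
  have aal j : (a j <= al j)%N by rewrite -E laddE leq_addr.
  pose fa : {ffun 'I_m -> 'I_(lweight al).+1} := [ffun j => inord (a j)].
  have Efa : bounded_letter fa = a.
    by apply/letterP=> j; rewrite !ffunE inordK // ltnS (leq_trans (aal j)) ?letter_le_lweight.
  have Eb : lsub al a = b by apply/letterP=> j; rewrite ffunE -E laddE addKn.
  rewrite (bigD1 fa) /=; last by rewrite inE /= Efa Eb va vb !andbT; apply/forallP.
  rewrite Efa Eb !eqxx big1 ?addr0 // => f /andP [_ fnfa].
  case: eqP => // -[Efa']; case/negP: fnfa; apply/eqP/ffunP=> j; apply: val_inj.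
  by have := congr1 (fun x : letter m => x j) Efa'; rewrite -Efa !ffunE.
rewrite big1 // => f /and3P [/forallP fal v1 v2].
case: eqP => // -[Ea Eb]; move: nsplit; rewrite -Ea -Eb v1 v2 !andbT => /negP; case.
by apply/eqP/letterP=> j; rewrite laddE [lsub _ _ j]ffunE subnKC.
Qed.

End Splits.

Section CommutatorSums.
Variables (m : nat) (K : {set {set 'I_m}}) (k : comPzRingType).
Local Open Scope ring_scope.
Variables (al : letter m) (s : seq 'I_m) (I : 'I_m -> {set 'I_m}).
Hypothesis s_uniq : uniq s.
Hypothesis chiA_add_unit : forall i, i \in s -> ladd (chiA (I i)) (lunit i) = al.
Hypothesis valid_pairs : forall c d : letter m, lnz c -> (1 < lweight d)%N -> ladd d c = al ->
  valid_letter K c && (valid_letter K d == (c \notin [seq lunit i | i <- s])).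
Implicit Types (w : letter m).

Definition nz_split3 w0 w1 w2 : bool :=
  [&& lnz w0, lnz w1, lnz w2 & ladd (ladd w0 w1) w2 == al].

Lemma set_split_unit_l i w0 w1 w2 : i \in s ->
  (w0 == lunit i) && set_split (I i) w1 w2 = (w0 == lunit i) && nz_split3 w0 w1 w2.
Proof.
move=> si; case: eqP => //= ->; rewrite /set_split /nz_split3 lnz_unit /=.
by rewrite -(chiA_add_unit si) -laddA (laddC (chiA _)) (inj_eq (@laddI _ _)).
Qed.

Lemma set_split_unit_r i w0 w1 w2 : i \in s ->
  (w2 == lunit i) && set_split (I i) w0 w1 = (w2 == lunit i) && nz_split3 w0 w1 w2.
Proof.
move=> si; case: eqP => //= ->; rewrite /set_split /nz_split3 lnz_unit /=.
by rewrite -(chiA_add_unit si) (inj_eq (@laddIr _ _)).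
Qed.

Lemma valid_split_r w0 w1 w2 :
  lnz w0 && lnz w1 &&
    [&& ladd (ladd w0 w1) w2 == al, valid_letter K (ladd w0 w1) & valid_letter K w2]
  = nz_split3 w0 w1 w2 && (w2 \notin [seq lunit i | i <- s]).
Proof.
rewrite /nz_split3; case w00: (lnz w0); case w10: (lnz w1) => //=.
case: eqP => [E|_]; last by rewrite !andbF.
case w20: (lnz w2); last by rewrite /valid_letter w20 !andbF.
have d2 : (1 < lweight (ladd w0 w1))%N.
  by rewrite lweightD; move: w00 w10; rewrite !lnz_lweight; lia.
by have /andP [v2 /eqP ->] := valid_pairs w20 d2 E; rewrite v2 andbT.
Qed.

Lemma valid_split_l w0 w1 w2 :
  lnz w1 && lnz w2 &&
    [&& ladd w0 (ladd w1 w2) == al, valid_letter K w0 & valid_letter K (ladd w1 w2)]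
  = nz_split3 w0 w1 w2 && (w0 \notin [seq lunit i | i <- s]).
Proof.
rewrite /nz_split3 laddA; case w10: (lnz w1); case w20: (lnz w2); rewrite /= ?andbF //.
case: eqP => [E|_]; last by rewrite !andbF.
case w00: (lnz w0); last by rewrite /valid_letter w00 !andbF.
have d2 : (1 < lweight (ladd w1 w2))%N.
  by rewrite lweightD; move: w10 w20; rewrite !lnz_lweight; lia.
rewrite -laddA laddC in E.
by have /andP [v0 /eqP ->] := valid_pairs w00 d2 E; rewrite v0.
Qed.

Lemma commutator_sum_boundary (n : 'I_m -> nat) :
  is_boundary K (flatten [seq gcomm 1 (2 * n i - 2) (u_chain k i) (psi k (I i)) | i <- s]).
Proof.
apply: (boundary_of (z := splits K k al)); first exact: in_Omega_splits.
apply: coeff_eq_dcoeff_homog; [|exact: homog_splits|].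
  by apply: homog_flatten; apply/allP=> _ /mapP [i _ ->]; apply: homog_comm_unit_psi.
move=> w0 w1 w2; rewrite coeff_flatten big_map dcoeff_homog2 ?homog_splits //.
rewrite !coeff_splits -!if_and valid_split_r valid_split_l big_seq.
under eq_bigr => i si do
  rewrite coeff_comm_unit_psi (set_split_unit_l _ _ _ si) (set_split_unit_r _ _ _ si).
rewrite -big_seq; case: (nz_split3 w0 w1 w2) => /=; last first.
  by rewrite subrr big1 // => i _; rewrite !andbF subrr.
under eq_bigr => i _ do rewrite !andbT.
rewrite sumrB !sum_unit_mem //.
by case: (w0 \in _); case: (w2 \in _); rewrite /= ?subrr ?subr0 ?sub0r.
Qed.

End CommutatorSums.

Section Relations.
Variables (m : nat) (K : {set {set 'I_m}}) (k : comPzRingType).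

Lemma mf_comm_boundary i I : MF K I -> i \in I ->
  is_boundary K (gcomm 1 (2 * #|I| - 2) (u_chain k i) (psi k I)).
Proof.
move=> mfI iI.
suff : is_boundary K (flatten [seq gcomm 1 (2 * #|I| - 2) (u_chain k j) (psi k I) | j <- [:: i]]).
  by rewrite /= cats0.
apply: (@commutator_sum_boundary m K k (ladd (chiA I) (lunit i)) [:: i] (fun=> I) isT).
  by move=> j; rewrite mem_seq1 => /eqP ->.
by move=> c d c0 d1 E; rewrite /= mem_seq1; exact: (mf_pair mfI iI c0 d1 E).
Qed.

Lemma amf_sum_boundary L : AMF K L -> is_boundary K (amf_sum K k L).
Proof.
move=> amfL; apply: (@commutator_sum_boundary m K k (chiA L) _ (fun i => L :\ i)).
- exact/filter_uniq/enum_uniq.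
- by move=> i; rewrite mem_filter mem_enum => /andP [_ iL]; apply: chiA_setD1.
- by move=> c d c0 d1 E; apply: amf_pair.
Qed.

End Relations.

Theorem mainTheorem13 (k : comPzRingType) (m : nat) (K : {set {set 'I_m}}) :
  simplicial_complex K ->
  [/\ (forall i : 'I_m, is_boundary K (chain_mul (u_chain k i) (u_chain k i))),
      (forall i j : 'I_m, [set i; j] \in K ->
         is_boundary K (gcomm 1 1 (u_chain k i) (u_chain k j))),
      (forall (i : 'I_m) (I : {set 'I_m}), MF K I -> i \in I ->
         is_boundary K (gcomm 1 (2 * #|I| - 2) (u_chain k i) (psi k I)))
    & (forall L : {set 'I_m}, AMF K L -> is_boundary K (amf_sum K k L))].
Proof.
case=> _ vertexK; split.
- by move=> i; apply: unit_sq_boundary.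
- exact: unit_comm_boundary.
- exact: mf_comm_boundary.
- exact: amf_sum_boundary.
Qed.
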